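(* Let $A,B\in\mathbb{R}^{p\times p}$, $a,b\in\mathbb{R}^p$, $\alpha,\beta\in\mathbb{R}$, and let $$f(x)=\frac{g(x)}{q(x)}=\frac{\frac12\langle Ax,x\rangle+\langle a,x\rangle+\alpha}{\frac12\langle Bx,x\rangle+\langle b,x\rangle+\beta}.$$ Let $0<m<M$ and $K=\{x\in\mathbb{R}^p: m\le q(x)\le M\}$. Assume $A$ is positive definite and at least one of the following holds: (a) $B=0$; (b) $g$ is non-negative on $K$ and $B$ is negative semi-definite; (c) $g$ is non-positive on $K$ and $B$ is positive semi-definite. Let $x^*$ be a minimizer of $f$ on $K$. Then $f$ is $\kappa$-quasar-convex on $K$ with respect to $x^*$ with $\kappa=\frac mM$, and $f$ is $(\frac\kappa2,\gamma)$-strongly quasar-convex on $K$ with respect to $x^*$, where $\gamma=\frac{\sigma_{\min}(A)}{m}$. Moreover, for every $\lambda\in(0,1)$, $f$ is $\big(\lambda\kappa,(\lambda^{-1}-1)\frac{\sigma_{\min}(A)}{4M}\big)$-strongly quasar-convex on $K$ with respect to $x^*$.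
   Context: $\sigma_{\min}(A)$ is the minimum eigenvalue of $A$. For $\kappa\in(0,1]$ and $\mu\ge0$, $f$ is $(\kappa,\mu)$-strongly quasar-convex on $K$ with respect to $x^*$ if $f(x^* )\ge f(x)+\frac1\kappa\langle\nabla f(x),x^*-x\rangle+\frac\mu2\|x^*-x\|^2$ for all $x\in K$; $\kappa$-quasar-convex means the case $\mu=0$. *)

From HB Require Import structures.
From mathcomp Require Import all_boot all_order all_algebra.
From mathcomp Require Import all_classical all_reals all_analysis.
Set Implicit Arguments. Unset Strict Implicit. Unset Printing Implicit Defensive.
Import Order.TTheory GRing.Theory Num.Theory.
Import numFieldNormedType.Exports.
Local Open Scope ring_scope.
Local Open Scope classical_set_scope.

Definition dotp (R : realType) (p : nat) (u v : 'cV[R]_p) : R := (u^T *m v) 0 0.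

Definition grad (R : realType) (p : nat) (f : 'cV[R]_p -> R) (x : 'cV[R]_p)
  : 'cV[R]_p := \col_i derive f x (delta_mx i 0 : 'cV[R]_p).

Definition sigma_min (R : realType) (p : nat) (A : 'M[R]_p) : R :=
  inf [set a : R | eigenvalue A a].

Definition strongly_quasar_convex (R : realType) (p : nat) (kappa mu : R)
  (f : 'cV[R]_p -> R) (K : set 'cV[R]_p) (xs : 'cV[R]_p) : Prop :=
  forall x, K x ->
    f x + kappa^-1 * dotp (grad f x) (xs - x) + mu / 2 * dotp (xs - x) (xs - x)
      <= f xs.

Definition quasar_convex (R : realType) (p : nat) (kappa : R)
  (f : 'cV[R]_p -> R) (K : set 'cV[R]_p) (xs : 'cV[R]_p) : Prop :=
  strongly_quasar_convex kappa 0 f K xs.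

Definition quadf (R : realType) (p : nat) (A : 'M[R]_p) (a : 'cV[R]_p) (alpha : R)
  (x : 'cV[R]_p) : R := 2^-1 * dotp (A *m x) x + dotp a x + alpha.

Definition posdef (R : realType) (p : nat) (A : 'M[R]_p) : Prop :=
  A^T = A /\ forall x : 'cV[R]_p, x != 0 -> 0 < dotp (A *m x) x.

Definition psd (R : realType) (p : nat) (B : 'M[R]_p) : Prop :=
  forall x : 'cV[R]_p, 0 <= dotp (B *m x) x.

Definition nsd (R : realType) (p : nat) (B : 'M[R]_p) : Prop :=
  forall x : 'cV[R]_p, dotp (B *m x) x <= 0.

From HB Require Import structures.
From mathcomp Require Import all_boot all_order all_algebra.
From mathcomp Require Import all_classical all_reals all_analysis.
From mathcomp Require Import ring lra.
Set Implicit Arguments. Unset Strict Implicit.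
Import Order.TTheory GRing.Theory Num.Theory.
Import numFieldNormedType.Exports.
Local Open Scope ring_scope.
Local Open Scope classical_set_scope.

(** Write xs for the minimizer and d = xs - x.  The exact second-order
    expansions of g and q give
      q(xs) (f(xs) - f(x)) = q(x) <grad f(x), d> + <Ad, d>/2 - f(x) <Bd, d>/2,
    and each of the hypotheses (a)-(c) makes the last term nonnegative.  As xs
    is a minimizer and q(xs) >= m >= kappa q(x) on K, the left-hand side is at
    most kappa q(x) (f(xs) - f(x)); dividing by kappa q(x) gives quasar
    convexity, and the leftover <Ad, d>/2 >= sigma_min(A) |d|^2 / 2 pays for
    the strong versions once kappa is shrunk.  The spectral bound holds because
    the infimum of the Rayleigh quotient of a symmetric matrix is an eigenvalue. *)

Section DotProduct.
Variables (R : realType) (p : nat).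
Implicit Types (u v w : 'cV[R]_p) (C : 'M[R]_p).

Lemma dotpE u v : dotp u v = \sum_i u i 0 * v i 0.
Proof. by rewrite /dotp mxE; apply: eq_bigr => i _; rewrite mxE. Qed.

Lemma dotpC u v : dotp u v = dotp v u.
Proof. by rewrite !dotpE; apply: eq_bigr => i _; rewrite mulrC. Qed.

Lemma dotpDl u w v : dotp (u + w) v = dotp u v + dotp w v.
Proof. by rewrite /dotp linearD /= mulmxDl mxE. Qed.

Lemma dotpDr u w v : dotp v (u + w) = dotp v u + dotp v w.
Proof. by rewrite /dotp mulmxDr mxE. Qed.

Lemma dotpZl k u v : dotp (k *: u) v = k * dotp u v.
Proof. by rewrite /dotp linearZ /= -scalemxAl mxE. Qed.

Lemma dotpZr k u v : dotp v (k *: u) = k * dotp v u.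
Proof. by rewrite /dotp -scalemxAr mxE. Qed.

Lemma dotpNl u v : dotp (- u) v = - dotp u v.
Proof. by rewrite -scaleN1r dotpZl mulN1r. Qed.

Lemma dotp0l v : dotp 0 v = 0.
Proof. by rewrite /dotp linear0 mul0mx mxE. Qed.

Lemma dotp_mulmx_trmx C u v : dotp (C *m u) v = dotp u (C^T *m v).
Proof. by rewrite /dotp trmx_mul mulmxA. Qed.

Lemma dotp_delta_mx w i : dotp w (delta_mx i 0) = w i 0.
Proof.
rewrite dotpE (bigD1 i) //= big1 => [|k /negbTE nki]; rewrite !mxE.
  by rewrite !eqxx mulr1 addr0.
by rewrite nki mulr0.
Qed.

Lemma dotp_ge0 u : 0 <= dotp u u.
Proof. by rewrite dotpE; apply: sumr_ge0 => i _; rewrite -expr2 sqr_ge0. Qed.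

Lemma dotp_gt0 u : u != 0 -> 0 < dotp u u.
Proof.
move=> u0; rewrite lt_def dotp_ge0 andbT; apply: contra u0.
rewrite dotpE psumr_eq0 => [/allP u2_eq0|i _]; last by rewrite -expr2 sqr_ge0.
apply/eqP/matrixP => i j; rewrite (ord1 j) !mxE.
by move: (u2_eq0 i (mem_index_enum _)); rewrite /= -expr2 sqrf_eq0 => /eqP.
Qed.

Lemma sqr_coord_le_dotp u i : u i 0 ^+ 2 <= dotp u u.
Proof.
rewrite dotpE (bigD1 i) //= -expr2 lerDl; apply: sumr_ge0 => j _.
by rewrite -expr2 sqr_ge0.
Qed.

Lemma normrM_coord_le_dotp u i j : `|u i 0 * u j 0| <= dotp u u.
Proof.
have := sqr_coord_le_dotp u i; have := sqr_coord_le_dotp u j.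
rewrite normrM -(real_normK (num_real (u i 0))) -(real_normK (num_real (u j 0))).
have := normr_ge0 (u i 0); have := normr_ge0 (u j 0); nra.
Qed.

Lemma dotp_mulmx_le_sum_norm C u :
  dotp u (C *m u) <= (\sum_i \sum_j `|C i j|) * dotp u u.
Proof.
rewrite [leLHS]dotpE mulr_suml; apply: ler_sum => i _.
rewrite mxE mulr_sumr mulr_suml; apply: ler_sum => j _.
apply: le_trans (ler_norm _) _.
by rewrite mulrCA normrM ler_wpM2l // mulrC normrM_coord_le_dotp.
Qed.

End DotProduct.

Section QuadraticFunction.
Variables (R : realType) (p : nat).
Implicit Types (v x : 'cV[R]_p) (C : 'M[R]_p) (c : 'cV[R]_p).

Definition quadf_grad C c x : 'cV[R]_p := 2^-1 *: (C *m x + C^T *m x) + c.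

Lemma quadf_lineE C c al x v h :
  quadf C c al (h *: v + x) =
  quadf C c al x + h * dotp (quadf_grad C c x) v + h ^+ 2 * (2^-1 * dotp (C *m v) v).
Proof.
rewrite /quadf /quadf_grad mulmxDr -scalemxAr !(dotpDl, dotpDr, dotpZl, dotpZr).
by rewrite [dotp (C^T *m x) v]dotpC -dotp_mulmx_trmx; ring.
Qed.

Lemma quadf_is_derive C c al x v :
  is_derive x v (quadf C c al) (dotp (quadf_grad C c x) v).
Proof.
set G := dotp _ v; set H := 2^-1 * dotp (C *m v) v.
suff : (fun h : R => h^-1 *: ((quadf C c al \o shift x) (h *: v) - quadf C c al x))
    @ 0^' --> G.
  by move=> cvG; apply: DeriveDef; [apply/cvg_ex; exists G | apply: cvg_lim].
have quotE : {near 0^', (fun h => G + h * H) =1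
    (fun h : R => h^-1 *: ((quadf C c al \o shift x) (h *: v) - quadf C c al x))}.
  near=> h; rewrite /= quadf_lineE /GRing.scale /= -/G -/H; field.
  by near: h; exact: nbhs_dnbhs_neq.
apply: cvg_trans (near_eq_cvg quotE) _.
have cvG : (fun h : R => G + h * H) @ 0 --> G + 0 * H.
  by apply: cvgD; [exact: cvg_cst | apply: cvgM; [exact: cvg_id | exact: cvg_cst]].
rewrite mul0r addr0 in cvG.
exact: cvg_within_filter cvG.
Unshelve. all: by end_near.
Qed.

Variables (A B : 'M[R]_p) (a b : 'cV[R]_p) (alpha beta : R).
Local Notation g := (quadf A a alpha).
Local Notation q := (quadf B b beta).
Local Notation f := (fun y => g y / q y).

Lemma grad_quadf_ratio x : q x != 0 ->
  grad f x = (q x)^-1 *: quadf_grad A a x - (g x / q x ^+ 2) *: quadf_grad B b x.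
Proof.
move=> qx0; apply/matrixP => i j; rewrite (ord1 j) [LHS]mxE.
have dg := quadf_is_derive A a alpha x (delta_mx i 0).
have dq := quadf_is_derive B b beta x (delta_mx i 0).
have -> : f = g * (fun y => (q y)^-1) by [].
rewrite deriveM ?deriveV ?derive_val ?dotp_delta_mx //; last exact: derivableV.
move: (quadf_grad A a x) (quadf_grad B b x) => wA wB {dg dq}.
by rewrite !mxE /GRing.scale /=; field.
Qed.

Lemma quadf_ratio_increment x y : q x != 0 -> q y != 0 ->
  q y * (f y - f x) = q x * dotp (grad f x) (y - x)
    + 2^-1 * dotp (A *m (y - x)) (y - x) - 2^-1 * f x * dotp (B *m (y - x)) (y - x).
Proof.
move=> qx0; have [d ->] : exists d : 'cV_p, y = 1 *: d + x.
  by exists (y - x); rewrite scale1r subrK.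
rewrite !quadf_lineE scale1r addrK grad_quadf_ratio //.
move: (quadf_grad A a x) (quadf_grad B b x) => wA wB qy0.
rewrite dotpDl dotpNl !dotpZl; field.
by rewrite qx0 /=; apply: contra qy0 => /eqP qy0; apply/eqP; lra.
Qed.

End QuadraticFunction.

Lemma sqr_le_mul_of_quadratic_ge0 (R : realType) (a b c : R) :
  (forall t, 0 <= a + 2 * t * c + t ^+ 2 * b) -> 0 <= b -> c ^+ 2 <= a * b.
Proof.
move=> ge0 b_ge0; have [b0|b_neq0] := eqVneq b 0.
  rewrite b0 mulr0; have [->|c_neq0] := eqVneq c 0; first by rewrite expr0n.
  have := ge0 (- (a + 1) / (2 * c)); rewrite b0 mulr0 addr0.
  have -> : 2 * (- (a + 1) / (2 * c)) * c = - (a + 1) by field.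
  lra.
have b_gt0 : 0 < b by rewrite lt_def b_neq0 b_ge0.
have := ge0 (- c / b).
have -> : a + 2 * (- c / b) * c + (- c / b) ^+ 2 * b = (a * b - c ^+ 2) / b by field.
rewrite pmulr_lge0 ?invr_gt0 //; lra.
Qed.

Section SymmetricMatrix.
Variables (R : realType) (p : nat).
Implicit Types (u v : 'cV[R]_p) (S : 'M[R]_p).

Lemma psd_CauchySchwarz S u v : S^T = S -> psd S ->
  dotp (S *m u) v ^+ 2 <= dotp (S *m u) u * dotp (S *m v) v.
Proof.
move=> ST S_psd; apply: sqr_le_mul_of_quadratic_ge0 (S_psd v) => t.
have := S_psd (t *: v + u).
rewrite mulmxDr -scalemxAr !(dotpDl, dotpDr, dotpZl, dotpZr).
rewrite [dotp (S *m v) u]dotp_mulmx_trmx ST [dotp v _]dotpC.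
lra.
Qed.

Lemma psd_unitmx_coercive S : S^T = S -> psd S -> S \in unitmx ->
  exists2 c, 0 < c & forall u, c * dotp u u <= dotp (S *m u) u.
Proof.
move=> ST S_psd S_unit; set C := \sum_i \sum_j `|invmx S i j|.
have C_ge0 : 0 <= C by do 2!apply: sumr_ge0 => ? _.
exists (C + 1)^-1; first by rewrite invr_gt0 ltr_wpDl.
move=> u; rewrite mulrC ler_pdivrMr ?ltr_wpDl //.
(* Cauchy-Schwarz for S at (S^-1 u, u): |u|^4 <= <u, S^-1 u> <Su, u> <= C |u|^2 <Su, u>. *)
have CS := psd_CauchySchwarz (invmx S *m u) u ST S_psd.
rewrite mulmxA mulmxV // mul1mx in CS.
have := le_trans CS (ler_wpM2r (S_psd u) (dotp_mulmx_le_sum_norm (invmx S) u)).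
have := dotp_ge0 u; rewrite le_eqVlt => /predU1P[<- _|uu_gt0].
  by rewrite mulr_ge0 ?addr_ge0 ?S_psd.
rewrite expr2 [C * _]mulrC -mulrA ler_pM2l // => le_Cs.
have := S_psd u; nra.
Qed.

Definition rayleigh_min (A : 'M[R]_p) : R :=
  inf [set r | exists2 u : 'cV[R]_p, u != 0 & r = dotp (A *m u) u / dotp u u].

Lemma rayleigh_min_le (A : 'M[R]_p) u : rayleigh_min A * dotp u u <= dotp (A *m u) u.
Proof.
have [->|u0] := eqVneq u 0; first by rewrite mulmx0 !dotp0l mulr0.
rewrite -ler_pdivlMr ?dotp_gt0 //; apply: ge_inf; last by exists u.
exists (- \sum_i \sum_j `|(- A) i j|) => _ [w w0 ->].
rewrite ler_pdivlMr ?dotp_gt0 //.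
have := dotp_mulmx_le_sum_norm (- A) w; rewrite mulNmx dotpC dotpNl; lra.
Qed.

Lemma eigenvalue_rayleigh_min (A : 'M[R]_p) : (0 < p)%N -> A^T = A ->
  eigenvalue A (rayleigh_min A).
Proof.
move=> p_gt0 AT; set mu := rayleigh_min A; set S := A - mu%:M.
have SE u : dotp (S *m u) u = dotp (A *m u) u - mu * dotp u u.
  by rewrite mulmxBl dotpDl dotpNl mul_scalar_mx dotpZl.
have S_psd : psd S by move=> u; rewrite SE subr_ge0 rayleigh_min_le.
have ST : S^T = S by rewrite linearB /= tr_scalar_mx AT.
apply/eigenvalueP; have [S_unit|] := boolP (S \in unitmx).
  (* A coercive S would leave room for mu + c below every Rayleigh quotient. *)
  exfalso; have [c c_gt0 Sc] := psd_unitmx_coercive ST S_psd S_unit.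
  suff : mu + c <= mu by lra.
  apply: lb_le_inf.
    pose u : 'cV[R]_p := const_mx 1.
    have u0 : u != 0.
      by apply/eqP => /matrixP/(_ (Ordinal p_gt0) 0); rewrite !mxE; apply/eqP/oner_neq0.
    by exists (dotp (A *m u) u / dotp u u); exists u.
  move=> _ [u u0 ->]; rewrite ler_pdivlMr ?dotp_gt0 //.
  by have := Sc u; rewrite SE mulrDl; lra.
rewrite unitmxE unitfE negbK => /det0P [v v0 vS].
exists v => //; apply/eqP; rewrite -subr_eq0 -mul_mx_scalar -mulmxBr.
by rewrite -vS.
Qed.

Lemma eigenvalue_posdef_gt0 (A : 'M[R]_p) r : posdef A -> eigenvalue A r -> 0 < r.
Proof.
move=> [AT A_pos] /eigenvalueP [v vA v0].
have vT0 : v^T != 0 by rewrite trmx_eq0.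
have : A *m v^T = r *: v^T by rewrite -{1}AT -trmx_mul vA linearZ.
move: (A_pos _ vT0) => /[swap] ->; rewrite dotpZl.
by rewrite pmulr_lgt0 // dotp_gt0.
Qed.

Lemma sigma_min_posdef_le (A : 'M[R]_p) u : posdef A ->
  sigma_min A * dotp u u <= dotp (A *m u) u.
Proof.
move=> A_pd; have [->|u0] := eqVneq u 0; first by rewrite mulmx0 !dotp0l mulr0.
have p_gt0 : (0 < p)%N by case: (p) u u0 => // u; rewrite flatmx0 eqxx.
apply: le_trans (rayleigh_min_le A u); rewrite ler_wpM2r ?dotp_ge0 //.
apply: ge_inf; last exact: eigenvalue_rayleigh_min A_pd.1.
by exists 0 => r /(eigenvalue_posdef_gt0 A_pd)/ltW.
Qed.

Lemma sigma_min_posdef_ge0 (A : 'M[R]_p) :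
  posdef A -> 0 <= sigma_min A.
Proof.
move=> A_pd; rewrite /sigma_min.
have [->|/set0P eig_ne] := eqVneq [set a : R | eigenvalue A a] set0; first by rewrite inf0.
by apply: lb_le_inf eig_ne _ => r /(eigenvalue_posdef_gt0 A_pd)/ltW.
Qed.

End SymmetricMatrix.

Section QuasarConvexRatio.
Variables (R : realType) (p : nat).
Variables (A B : 'M[R]_p) (a b : 'cV[R]_p) (alpha beta : R).
Local Notation g := (quadf A a alpha).
Local Notation q := (quadf B b beta).
Local Notation f := (fun y => g y / q y).

Lemma quadf_ratio_sqc (K : set 'cV[R]_p) xs k mu :
  0 < k -> (forall x, K x -> 0 < q x) -> (forall x, K x -> k * q x <= q xs) ->
  (forall x, K x -> f xs <= f x) ->
  (forall x, K x -> f x * dotp (B *m (xs - x)) (xs - x) <= 0) ->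
  (forall x, K x ->
     mu * (k * q x) * dotp (xs - x) (xs - x) <= dotp (A *m (xs - x)) (xs - x)) ->
  strongly_quasar_convex k mu f K xs.
Proof.
move=> k_gt0 q_gt0 kq_le xs_min curvB curvA x Kx.
have qx_gt0 := q_gt0 x Kx; have kqx_gt0 := mulr_gt0 k_gt0 qx_gt0.
have qxs_gt0 : 0 < q xs by apply: lt_le_trans (kq_le x Kx).
have := quadf_ratio_increment A a alpha (lt0r_neq0 qx_gt0) (lt0r_neq0 qxs_gt0).
move: (kq_le x Kx) (xs_min x Kx) (curvA x Kx) (curvB x Kx) => /=.
set D := dotp (grad _ x) _; set dd := dotp (xs - x) _.
set fx := g x / q x; set fs := g xs / q xs.
move=> kqx_le fs_le curvAx curvBx incr.
rewrite -(ler_pM2r kqx_gt0).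
have -> : (fx + k^-1 * D + mu / 2 * dd) * (k * q x) =
    fx * (k * q x) + D * q x + mu * (k * q x) * dd / 2.
  by field; rewrite !lt0r_neq0.
(* Lets k q(x) replace q(xs) in front of f(xs) - f(x) in the increment identity. *)
have : (q xs - k * q x) * (fs - fx) <= 0 by apply: mulr_ge0_le0; lra.
nra.
Qed.

Lemma quadf_ratio_curvature_le0 (K : set 'cV[R]_p) x d :
  (forall x, K x -> 0 < q x) ->
  (B = 0 \/ ((forall x, K x -> 0 <= g x) /\ nsd B)
         \/ ((forall x, K x -> g x <= 0) /\ psd B)) ->
  K x -> f x * dotp (B *m d) d <= 0.
Proof.
move=> q_gt0 + Kx; have qx_gt0 := q_gt0 x Kx.
case=> [->|[[g_ge0 B_nsd]|[g_le0 B_psd]]].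
- by rewrite mul0mx dotp0l mulr0.
- by apply: mulr_ge0_le0 (B_nsd d); rewrite divr_ge0 ?g_ge0 ?ltW.
- by apply: mulr_le0_ge0 (B_psd d); rewrite mulr_le0_ge0 ?g_le0 ?invr_ge0 ?ltW.
Qed.

Lemma quadf_ratio_sqc_band (m M : R) xs k mu :
  let K := [set x | m <= q x <= M] in
  0 < m -> posdef A ->
  (B = 0 \/ ((forall x, K x -> 0 <= g x) /\ nsd B)
         \/ ((forall x, K x -> g x <= 0) /\ psd B)) ->
  K xs -> (forall x, K x -> f xs <= f x) ->
  0 < k -> k * M <= m -> (forall t, 0 < t <= M -> mu * (k * t) <= sigma_min A) ->
  strongly_quasar_convex k mu f K xs.
Proof.
move=> K m_gt0 A_pd HB Kxs xs_min k_gt0 kM_le sigma_le.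
have q_gt0 x : K x -> 0 < q x by move=> /andP[mq _]; apply: lt_le_trans mq.
apply: quadf_ratio_sqc => // x Kx.
- have /andP[_ qx_le] := Kx; have /andP[m_le _] := Kxs.
  exact: le_trans (ler_wpM2l (ltW k_gt0) qx_le) (le_trans kM_le m_le).
- exact: quadf_ratio_curvature_le0 q_gt0 HB Kx.
- have /andP[_ qx_le] := Kx.
  apply: le_trans (sigma_min_posdef_le _ A_pd).
  by rewrite ler_wpM2r ?dotp_ge0 // sigma_le // q_gt0.
Qed.

End QuasarConvexRatio.

Theorem proposition5p5 (R : realType) (p : nat)
  (A B : 'M[R]_p) (a b : 'cV[R]_p) (alpha beta m M : R) (xs : 'cV[R]_p) :
  let g := quadf A a alpha in
  let q := quadf B b beta in
  let f := fun x => g x / q x in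
  let K := [set x | m <= q x <= M] in
  0 < m -> m < M ->
  posdef A ->
  (B = 0 \/ ((forall x, K x -> 0 <= g x) /\ nsd B)
         \/ ((forall x, K x -> g x <= 0) /\ psd B)) ->
  K xs -> (forall x, K x -> f xs <= f x) ->
  let kappa := m / M in
  quasar_convex kappa f K xs /\
  strongly_quasar_convex (kappa / 2) (sigma_min A / m) f K xs /\
  (forall lambda : R, 0 < lambda < 1 ->
     strongly_quasar_convex (lambda * kappa)
       ((lambda^-1 - 1) * (sigma_min A / (4 * M))) f K xs).
Proof.
move=> g q f K m_gt0 lt_mM A_pd HB Kxs xs_min kappa.
have sqc := quadf_ratio_sqc_band m_gt0 A_pd HB Kxs xs_min.
have sigma_ge0 := sigma_min_posdef_ge0 A_pd.
have M_gt0 : 0 < M by lra.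
have kappa_gt0 : 0 < kappa by rewrite divr_gt0.
have kappaM : kappa * M = m by rewrite divfK ?lt0r_neq0.
split; [|split].
- by apply: sqc; rewrite ?kappaM // => t _; rewrite mul0r.
- apply: sqc; [by rewrite divr_gt0 | by rewrite mulrAC kappaM; lra |].
  move=> t /andP[t_gt0 t_le].
  rewrite (_ : sigma_min A / m * (kappa / 2 * t) = sigma_min A * (t / (2 * M))).
    by rewrite ler_piMr // ler_pdivrMr ?mul1r; lra.
  by rewrite /kappa; field; rewrite !lt0r_neq0.
- move=> lambda /andP[l_gt0 l_lt1].
  apply: sqc; [by rewrite mulr_gt0 | by rewrite -mulrA kappaM; nra |].
  move=> t /andP[t_gt0 t_le].
  rewrite (_ : (lambda^-1 - 1) * (sigma_min A / (4 * M)) * (lambda * kappa * t) =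
               sigma_min A * ((1 - lambda) * m * t / (4 * M ^+ 2))).
    rewrite ler_piMr // ler_pdivrMr ?mul1r ?mulr_gt0 ?exprn_gt0 //.
    have : m * t <= M ^+ 2 by rewrite expr2 ler_pM //; lra.
    nra.
  by rewrite /kappa; field; rewrite !lt0r_neq0.
Qed.
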